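(* Let $k:\mathbb{R}^D\times\mathbb{R}^D\to\mathbb{R}$ be a translation-invariant positive definite kernel with $k(x,x)=1$ for all $x$ and $0\le k(x,x')\le 1$, and let $0<\rho<1$. Let $X=\{x_1,\dots,x_N\}\subset\mathbb{R}^D$ be a dataset, and let $Z=\{Z_1,\dots,Z_M\}\subseteq X$ be the set of inducing point locations obtained by processing $x_1,\dots,x_N$ sequentially with the Online Inducing Point Selection procedure (defined in the context) with threshold $\rho$, where the first point is always selected. Assume $K_Z$ is invertible. Then $$\|K_X-Q_X\|\le (N-M)\left(1-\frac{\rho^2}{1+M(M-1)\rho}\right),$$ where $\|\cdot\|$ denotes the Frobenius norm.
   Context: Online Inducing Point Selection (OIPS): given a kernel $k$, a threshold $0<\rho<1$ and a current set of inducing point locations $Z=\{Z_1,\dots,Z_M\}\subset\mathbb{R}^D$, when a new sample $x$ arrives one computes $d=\max_{j} k(x,Z_j)$; if $d<\rho$ (or if $Z$ is empty), then $x$ is added to $Z$ (so $M$ increases by one), otherwise $Z$ is left unchanged. Samples are processed one at a time, each exactly once. Notation: for finite sets $A,B$ of points, $K_{AB}$ is the matrix $(k(a,b))_{a\in A,b\in B}$ and $K_A=K_{AA}$; $K_X$ is the $N\times N$ kernel matrix on the dataset and $Q_X=K_{XZ}K_Z^{-1}K_{ZX}$ is the Nyström approximation of $K_X$ using the subset $Z$. *)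

From HB Require Import structures.
From mathcomp Require Import all_boot all_order all_algebra.
From mathcomp Require Import reals.
Set Implicit Arguments. Unset Strict Implicit. Unset Printing Implicit Defensive.
Import Order.TTheory GRing.Theory Num.Theory.
Local Open Scope ring_scope.

Section Defs.
Variables (R : realType) (D : nat).
Notation pt := 'rV[R]_D.
Implicit Types (k : pt -> pt -> R).

Definition pd_kernel k :=
  (forall x y, k x y = k y x) /\
  (forall (n : nat) (xs : 'I_n -> pt) (c : 'I_n -> R),
      0 <= \sum_(i < n) \sum_(j < n) c i * c j * k (xs i) (xs j)).

Definition translation_invariant k :=
  forall x y a : pt, k (x + a) (y + a) = k x y.

Definition oips_step k (rho : R) (Z : seq pt) (x : pt) : seq pt :=
  match Z with
  | [::] => [:: x]
  | z0 :: _ =>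
      if \big[Num.max/k x z0]_(z <- Z) k x z < rho then rcons Z x else Z
  end.

Definition oips k (rho : R) (X : seq pt) : seq pt :=
  foldl (oips_step k rho) [::] X.

Definition kmx k (A B : seq pt) : 'M[R]_(size A, size B) :=
  \matrix_(i < size A, j < size B) k (nth 0 A i) (nth 0 B j).

Definition nystrom k (X Z : seq pt) : 'M[R]_(size X) :=
  kmx k X Z *m invmx (kmx k Z Z) *m kmx k Z X.

End Defs.

Definition frobenius (R : realType) (m n : nat) (A : 'M[R]_(m, n)) : R :=
  Num.sqrt (\sum_(i < m) \sum_(j < n) A i j ^+ 2).

From HB Require Import structures.
From mathcomp Require Import all_boot all_order all_algebra.
From mathcomp Require Import reals ring lra.
Set Implicit Arguments. Unset Strict Implicit. Unset Printing Implicit Defensive.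
Import Order.TTheory GRing.Theory Num.Theory.
Local Open Scope ring_scope.

(* Write E = K_X - Q_X for the Nystrom residual.  Three facts combine:
   - E is a Schur complement of the joint Gram matrix of (X, Z), hence
     symmetric positive semidefinite; for such matrices |E_ij|^2 <= E_ii E_jj
     (Cauchy-Schwarz), so the Frobenius norm of E is at most its trace.
   - Diagonal entries: E_ii = 1 - b_i K_Z^-1 b_i^T with b_i the i-th row of
     K_XZ.  If x_i is an inducing point then E_ii = 0; otherwise the selection
     rule provides z_j in Z with k(x_i, z_j) >= rho, and Cauchy-Schwarz in the
     K_Z^-1 geometry gives b_i K_Z^-1 b_i^T >= k(x_i, z_j)^2 >= rho^2.
   - Z is a duplicate-free subset of X, so at most N - M samples lie outside.
   Hence ||E||_F <= tr E <= (1 - rho^2)(N - M), which is below the stated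
   bound. *)

Section QuadraticForms.
Variable R : realFieldType.

Definition qform p q (u : 'rV[R]_p) (A : 'M[R]_(p, q)) (w : 'rV[R]_q) : R :=
  (u *m A *m w^T) 0 0.

Definition psd n (A : 'M[R]_n) := forall v : 'rV[R]_n, 0 <= qform v A v.

Lemma discriminant_le (a b d : R) :
  (forall t s : R, 0 <= t ^+ 2 * a + 2 * t * s * b + s ^+ 2 * d) ->
  b ^+ 2 <= a * d.
Proof.
move=> nonneg.
have a_ge0 : 0 <= a by have := nonneg 1 0; rewrite !expr2; lra.
have [a0|a_neq0] := eqVneq a 0.
  have [b0|b_neq0] := eqVneq b 0; first by rewrite b0 a0 expr2 !mul0r.
  have := nonneg (- (d + 1) / (2 * b)) 1.
  have -> : 2 * (- (d + 1) / (2 * b)) * 1 * b = - (d + 1) by field; rewrite b_neq0.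
  rewrite a0 mulr0 expr1n mul1r add0r; lra.
have a_gt0 : 0 < a by rewrite lt_def a_neq0.
have := nonneg (- b) a.
have -> : (- b) ^+ 2 * a + 2 * (- b) * a * b + a ^+ 2 * d = a * (a * d - b ^+ 2).
  by rewrite !expr2; ring.
by rewrite pmulr_rge0 // subr_ge0.
Qed.

Lemma qformE p q (u : 'rV[R]_p) (A : 'M[R]_(p, q)) (w : 'rV[R]_q) :
  qform u A w = \sum_i \sum_j u 0 i * w 0 j * A i j.
Proof.
rewrite /qform mxE; under eq_bigr => j _ do rewrite !mxE big_distrl /=.
rewrite exchange_big /=; apply: eq_bigr => i _; apply: eq_bigr => j _.
by rewrite mulrAC mulrC mulrA.
Qed.

Lemma qform_tr p q (A : 'M[R]_(p, q)) u w : qform w A^T u = qform u A w.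
Proof.
have tr00 (M : 'M[R]_1) : M 0 0 = M^T 0 0 by rewrite mxE.
by rewrite /qform tr00 !trmx_mul !trmxK mulmxA.
Qed.

Lemma qform_sym n (A : 'M[R]_n) u w : A^T = A -> qform w A u = qform u A w.
Proof. by move=> symA; rewrite -qform_tr symA. Qed.

Lemma psd_cauchy_schwarz n (A : 'M[R]_n) u w : A^T = A -> psd A ->
  qform u A w ^+ 2 <= qform u A u * qform w A w.
Proof.
move=> symA psdA; apply: discriminant_le => t s.
have cross := qform_sym u w symA; rewrite /qform !mxE in cross.
have := psdA (t *: u + s *: w).
rewrite /qform linearD !linearZ /= !mulmxDl !mulmxDr -!scalemxAl -!scalemxAr.
by rewrite !mxE cross; congr (0 <= _); rewrite !expr2; ring.
Qed.

Lemma qform_row_block m n (K : 'M[R]_m) (B : 'M[R]_(m, n)) (C : 'M[R]_n) a b :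
  qform (row_mx a b) (block_mx K B B^T C) (row_mx a b)
  = qform a K a + 2 * qform a B b + qform b C b.
Proof.
have add00 (M N : 'M[R]_1) : (M + N) 0 0 = M 0 0 + N 0 0 by rewrite mxE.
rewrite {1}/qform mul_row_block tr_row_mx mul_row_col !mulmxDl !add00.
by rewrite -!/(qform _ _ _) qform_tr; ring.
Qed.

Lemma qform_delta p q (A : 'M[R]_(p, q)) i j :
  qform (delta_mx 0 i) A (delta_mx 0 j) = A i j.
Proof. by rewrite /qform trmx_delta -rowE -colE !mxE. Qed.

Lemma psd_diag_ge0 n (A : 'M[R]_n) i : psd A -> 0 <= A i i.
Proof. by move=> psdA; have := psdA (delta_mx 0 i); rewrite qform_delta. Qed.

Lemma psd_entry_sq n (A : 'M[R]_n) i j : A^T = A -> psd A ->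
  A i j ^+ 2 <= A i i * A j j.
Proof.
move=> symA psdA.
by have := psd_cauchy_schwarz (delta_mx 0 i) (delta_mx 0 j) symA psdA; rewrite !qform_delta.
Qed.

Section InverseForm.
Variables (n : nat) (C : 'M[R]_n).
Hypotheses (symC : C^T = C) (unitC : C \in unitmx).

Lemma invmx_sym : (invmx C)^T = invmx C.
Proof. by rewrite trmx_inv symC. Qed.

Lemma schur_complement_psd m (K : 'M[R]_m) (B : 'M[R]_(m, n)) :
  (forall a b, 0 <= qform a K a + 2 * qform a B b + qform b C b) ->
  psd (K - B *m invmx C *m B^T).
Proof.
move=> block_psd c; set w := c *m B.
have := block_psd c (- (w *m invmx C)).
have -> : qform c B (- (w *m invmx C)) = - qform w (invmx C) w.
  by rewrite /qform linearN /= trmx_mul invmx_sym mulmxN mulmxA mxE.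
have -> : qform (- (w *m invmx C)) C (- (w *m invmx C)) = qform w (invmx C) w.
  rewrite /qform linearN /= mulNmx mulmxN mulNmx opprK trmx_mul invmx_sym.
  by rewrite -(mulmxA w (invmx C) C) mulVmx // mulmx1 mulmxA.
have -> : qform c (K - B *m invmx C *m B^T) c = qform c K c - qform w (invmx C) w.
  by rewrite /qform mulmxBr mulmxBl /w trmx_mul !mulmxA [LHS]mxE [X in _ + X]mxE.
lra.
Qed.

Lemma inv_form_ge (b : 'rV[R]_n) j : psd C ->
  b 0 j ^+ 2 <= C j j * qform b (invmx C) b.
Proof.
move=> psdC; have := psd_cauchy_schwarz (delta_mx 0 j) (b *m invmx C) symC psdC.
have -> : qform (delta_mx 0 j) C (b *m invmx C) = b 0 j.
  rewrite /qform trmx_mul invmx_sym -mulmxA (mulmxA C) mulmxV // mul1mx.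
  by rewrite -rowE !mxE.
have -> : qform (b *m invmx C) C (b *m invmx C) = qform b (invmx C) b.
  rewrite /qform trmx_mul invmx_sym -(mulmxA b (invmx C) C) mulVmx // mulmx1.
  by rewrite mulmxA.
by rewrite qform_delta.
Qed.

Lemma inv_form_row j : qform (row j C) (invmx C) (row j C) = C j j.
Proof.
rewrite /qform rowE -(mulmxA _ C) mulmxV // mulmx1 trmx_mul symC.
by rewrite mulmxA -/(qform _ C _) qform_delta.
Qed.

End InverseForm.

End QuadraticForms.

(* For a symmetric positive semidefinite matrix the Frobenius norm is
   bounded by the trace, since |A_ij|^2 <= A_ii A_jj. *)
Lemma frobenius_le_trace (R : realType) n (A : 'M[R]_n) :
  A^T = A -> psd A -> frobenius A <= \tr A.
Proof.
move=> symA psdA.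
have tr_ge0 : 0 <= \tr A by apply: sumr_ge0 => i _; exact: psd_diag_ge0.
have sum_sq : \sum_i \sum_j A i j ^+ 2 <= \tr A ^+ 2.
  rewrite expr2 mulr_suml; apply: ler_sum => i _; rewrite mulr_sumr.
  by apply: ler_sum => j _; exact: psd_entry_sq.
by rewrite /frobenius (le_trans (ler_wsqrtr sum_sq)) // sqrtr_sqr ger0_norm.
Qed.

Section KernelMatrices.
Variables (R : realType) (D : nat) (k : 'rV[R]_D -> 'rV[R]_D -> R).
Hypothesis k_pd : pd_kernel k.

Lemma kmx_tr (A B : seq 'rV[R]_D) : (kmx k A B)^T = kmx k B A.
Proof. by apply/matrixP => i j; rewrite !mxE k_pd.1. Qed.

Lemma gram_psd n (xs : 'I_n -> 'rV[R]_D) : psd (\matrix_(i, j) k (xs i) (xs j)).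
Proof.
move=> c; rewrite qformE.
under eq_bigr => i _ do under eq_bigr => j _ do rewrite mxE.
exact: k_pd.2.
Qed.

Lemma gram_cat (X Z : seq 'rV[R]_D) :
  \matrix_(i, j) k (nth 0 (X ++ Z) i) (nth 0 (X ++ Z) j)
  = block_mx (kmx k X X) (kmx k X Z) (kmx k Z X) (kmx k Z Z)
    :> 'M_(size X + size Z).
Proof.
have nth_l (i : 'I_(size X)) : nth 0 (X ++ Z) (lshift (size Z) i) = nth 0 X i.
  by rewrite nth_cat /= ltn_ord.
have nth_r (i : 'I_(size Z)) : nth 0 (X ++ Z) (rshift (size X) i) = nth 0 Z i.
  by rewrite nth_cat /= ltnNge leq_addr /= addKn.
by rewrite -[LHS]submxK; congr block_mx; apply/matrixP => i j; rewrite !mxE ?nth_l ?nth_r.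
Qed.

Lemma kmx_block_psd (X Z : seq 'rV[R]_D) a b :
  0 <= qform a (kmx k X X) a + 2 * qform a (kmx k X Z) b + qform b (kmx k Z Z) b.
Proof.
have := gram_psd (fun i : 'I_(size X + size Z) => nth 0 (X ++ Z) i) (row_mx a b).
by rewrite gram_cat -(kmx_tr X Z) qform_row_block.
Qed.

Lemma kmx_psd (Z : seq 'rV[R]_D) : psd (kmx k Z Z).
Proof. exact: gram_psd. Qed.

Hypothesis k_diag : forall x, k x x = 1.

Section NystromResidual.
Variables (X Z : seq 'rV[R]_D).
Hypothesis unitZ : kmx k Z Z \in unitmx.

Local Notation KZ := (kmx k Z Z).
Local Notation KXZ := (kmx k X Z).
Local Notation resid := (kmx k X X - nystrom k X Z).

Lemma nystromE : nystrom k X Z = KXZ *m invmx KZ *m KXZ^T.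
Proof. by rewrite /nystrom kmx_tr. Qed.

Lemma resid_sym : resid^T = resid.
Proof.
by rewrite nystromE linearB /= kmx_tr !trmx_mul trmxK invmx_sym ?kmx_tr // mulmxA.
Qed.

Lemma resid_psd : psd resid.
Proof.
rewrite nystromE; apply: schur_complement_psd => //; first exact: kmx_tr.
exact: kmx_block_psd.
Qed.

Lemma resid_diag i :
  resid i i = 1 - qform (row i KXZ) (invmx KZ) (row i KXZ).
Proof.
rewrite nystromE [LHS]mxE [X in _ + X]mxE [kmx k X X i i]mxE k_diag.
by rewrite -qform_delta /qform !rowE trmx_mul !mulmxA.
Qed.

Lemma resid_diag_inducing (i : 'I_(size X)) (j : 'I_(size Z)) :
  X`_i = Z`_j -> resid i i = 0.
Proof.
move=> XiZj; rewrite resid_diag; have -> : row i KXZ = row j KZ.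
  by apply/matrixP => a b; rewrite !mxE XiZj.
by rewrite inv_form_row ?kmx_tr // mxE k_diag subrr.
Qed.

Lemma resid_diag_le (i : 'I_(size X)) (j : 'I_(size Z)) :
  resid i i <= 1 - k X`_i Z`_j ^+ 2.
Proof.
have := inv_form_ge (kmx_tr Z Z) unitZ (row i KXZ) j (@kmx_psd Z).
by rewrite resid_diag !mxE k_diag mul1r lerD2l lerN2.
Qed.

End NystromResidual.
End KernelMatrices.

Section OnlineSelection.
Variables (R : realType) (D : nat) (k : 'rV[R]_D -> 'rV[R]_D -> R) (rho : R).
Hypotheses (k_diag : forall x, k x x = 1) (rho_lt1 : rho < 1).

Definition covered (Z : seq 'rV[R]_D) (x : 'rV[R]_D) :=
  x \in Z \/ exists2 z, z \in Z & rho <= k x z.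

Lemma covered_sub Z Z' x : {subset Z <= Z'} -> covered Z x -> covered Z' x.
Proof.
move=> sZZ' [/sZZ' xZ'|[z /sZZ' zZ' close]]; first by left.
by right; exists z.
Qed.

Lemma oips_step_spec Z x :
  let Z' := oips_step k rho Z x in
  [/\ {subset Z <= Z'}, {subset Z' <= x :: Z}, uniq Z -> uniq Z' & covered Z' x].
Proof.
rewrite /oips_step; case: Z => [|z0 Z0].
  by split=> //; left; rewrite mem_head.
set Z := z0 :: Z0; case: ifPn => [far|near].
  split.
  - by move=> y yZ; rewrite mem_rcons inE yZ orbT.
  - by move=> y; rewrite mem_rcons.
  - move=> uZ; rewrite rcons_uniq uZ andbT; apply/negP => xZ.
    have := le_bigmax_seq (k x z0) x xpredT (k x) xZ isT.
    by rewrite k_diag => /le_lt_trans/(_ far)/lt_trans/(_ rho_lt1); rewrite ltxx.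
  - by left; rewrite mem_rcons mem_head.
split=> //; first by move=> y yZ; rewrite inE yZ orbT.
right; apply/hasP; apply: contraNT near => /hasPn farZ.
rewrite big_seq; apply: bigmax_lt => [|z zZ]; last by rewrite ltNge farZ.
by rewrite ltNge farZ // mem_head.
Qed.

Lemma foldl_oips_spec (X Z0 : seq 'rV[R]_D) :
  let Z := foldl (oips_step k rho) Z0 X in
  [/\ {subset Z0 <= Z}, {subset Z <= X ++ Z0}, uniq Z0 -> uniq Z &
      {in X, forall x, covered Z x}].
Proof.
elim: X Z0 => [|x X IH] Z0 /=; first by split.
have [step_sub step_new step_uniq step_cov] := oips_step_spec Z0 x.
have [fold_sub fold_new fold_uniq fold_cov] := IH (oips_step k rho Z0 x).
split.
- by move=> y /step_sub /fold_sub.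
- move=> y /fold_new; rewrite /= !mem_cat => /orP[yX|/step_new].
    by rewrite inE mem_cat yX orbT.
  by rewrite !inE mem_cat => /orP[->|->]; rewrite ?orbT.
- by move=> /step_uniq /fold_uniq.
- move=> y; rewrite inE => /orP[/eqP->|]; last exact: fold_cov.
  exact: covered_sub step_cov.
Qed.

Lemma oips_spec (X : seq 'rV[R]_D) :
  let Z := oips k rho X in
  [/\ {subset Z <= X}, uniq Z & {in X, forall x, covered Z x}].
Proof.
have [_ sub uniqZ cov] := foldl_oips_spec X [::].
split=> //; last exact: uniqZ.
by move=> y /sub; rewrite cats0.
Qed.

End OnlineSelection.

Lemma count_outside (T : eqType) (X Z : seq T) :
  uniq Z -> {subset Z <= X} -> (count (predC (mem Z)) X + size Z <= size X)%N.
Proof.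
move=> uZ sZX; rewrite -(count_predC (mem Z) X) addnC leq_add2r -size_filter.
by apply: uniq_leq_size => // z zZ; rewrite mem_filter; apply/andP; split; [exact: zZ | exact: sZX].
Qed.

Lemma sum_outside_le (R : numDomainType) (T : eqType) (x0 : T) (X Z : seq T)
    (f : 'I_(size X) -> R) (c : R) :
  (forall i : 'I_(size X), nth x0 X i \in Z -> f i = 0) ->
  (forall i : 'I_(size X), nth x0 X i \notin Z -> f i <= c) ->
  \sum_i f i <= c * (count (predC (mem Z)) X)%:R.
Proof.
move=> f_in f_out.
have -> : count (predC (mem Z)) X = (\sum_(i < size X) (nth x0 X i \notin Z))%N.
  by rewrite -sum1_count big_mkcond (big_nth x0) big_mkord.
rewrite natr_sum mulr_sumr; apply: ler_sum => i _.
case: (boolP (nth x0 X i \in Z)) => XiZ; first by rewrite mulr0 f_in.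
by rewrite mulr1 f_out.
Qed.

Lemma paper_bound_ge (R : realFieldType) (cnt N M rho : R) :
  0 <= cnt -> cnt + M <= N -> 0 <= M * (M - 1) -> 0 < rho < 1 ->
  (1 - rho ^+ 2) * cnt <= (N - M) * (1 - rho ^+ 2 / (1 + M * (M - 1) * rho)).
Proof.
move=> cnt_ge0 cntMN MM1 /andP[rho_gt0 rho_lt1].
have den_ge1 : 1 <= 1 + M * (M - 1) * rho by rewrite lerDl mulr_ge0 // ltW.
have frac_le : rho ^+ 2 / (1 + M * (M - 1) * rho) <= rho ^+ 2.
  by rewrite ler_pdivrMr ?(lt_le_trans ltr01) // ler_peMr ?sqr_ge0.
have : 0 <= 1 - rho ^+ 2 by rewrite subr_ge0 expr_le1 // ltW.
nra.
Qed.

Section OipsResidual.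
Variables (R : realType) (D : nat) (k : 'rV[R]_D -> 'rV[R]_D -> R) (rho : R).
Variable X : seq 'rV[R]_D.
Hypotheses (k_pd : pd_kernel k) (k_diag : forall x, k x x = 1).
Hypotheses (rho_gt0 : 0 < rho) (rho_lt1 : rho < 1).

Local Notation Z := (oips k rho X).
Hypothesis unitZ : kmx k Z Z \in unitmx.

(* A sample that was not selected is rho-close to a selected one, so its
   residual variance is at most 1 - rho^2. *)
Lemma resid_diag_outside (i : 'I_(size X)) :
  X`_i \notin Z -> (kmx k X X - nystrom k X Z) i i <= 1 - rho ^+ 2.
Proof.
have [_ _ cov] := oips_spec k_diag rho_lt1 X.
case: (cov _ (mem_nth 0 (ltn_ord i))) => [->//|[z zZ close] _].
have jZ : (index z Z < size Z)%N by rewrite index_mem.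
apply: le_trans (resid_diag_le k_pd k_diag unitZ i (Ordinal jZ)) _.
rewrite /= nth_index // lerD2l lerN2.
have rho_ge0 := ltW rho_gt0.
by rewrite ler_pXn2r // nnegrE // (le_trans rho_ge0).
Qed.

(* Summing the diagonal: only unselected samples contribute. *)
Lemma resid_trace_le :
  \tr (kmx k X X - nystrom k X Z) <= (1 - rho ^+ 2) * (count (predC (mem Z)) X)%:R.
Proof.
apply: sum_outside_le => [i XiZ|]; last exact: resid_diag_outside.
have jZ := XiZ; rewrite -index_mem in jZ.
by apply: (resid_diag_inducing k_pd k_diag unitZ (j := Ordinal jZ)); rewrite nth_index.
Qed.

End OipsResidual.

Theorem theorem2 (R : realType) (D : nat) (k : 'rV[R]_D -> 'rV[R]_D -> R)
  (rho : R) (X : seq 'rV[R]_D) :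
  pd_kernel k ->
  translation_invariant k ->
  (forall x, k x x = 1) ->
  (forall x y, 0 <= k x y <= 1) ->
  0 < rho < 1 ->
  kmx k (oips k rho X) (oips k rho X) \in unitmx ->
  let Z := oips k rho X in
  let N := (size X)%:R : R in
  let M := (size Z)%:R : R in
  frobenius (kmx k X X - nystrom k X Z)
    <= (N - M) * (1 - rho ^+ 2 / (1 + M * (M - 1) * rho)).
Proof.
move=> k_pd _ k_diag _ /andP[rho_gt0 rho_lt1] unitZ /=.
have [subZ uniqZ _] := oips_spec k_diag rho_lt1 X.
apply: le_trans (frobenius_le_trace (resid_sym k_pd _ _) (resid_psd k_pd unitZ)) _.
apply: le_trans (resid_trace_le k_pd k_diag rho_gt0 rho_lt1 unitZ) _.
apply: paper_bound_ge => //.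
- by rewrite -natrD ler_nat count_outside.
- case: (size (oips k rho X)) => [|m]; first by rewrite mul0r.
  by rewrite -natr1 addrK mulr_ge0 ?addr_ge0.
- by apply/andP.
Qed.
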